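(* Let $\mathcal{S}$ be a finite generalized quadrangle of order $s$ with $s$ even and $s\ge 4$, and let $G$ be a group of automorphisms of $\mathcal{S}$ acting regularly on the points. Then $|G/G'|$ divides either $1+s$ or $1+s^2$.
   Context: A generalized quadrangle of order $s$: each line has $s+1$ points, each point is on $s+1$ lines, and for each non-incident point-line pair $(P,\ell)$ there is a unique point on $\ell$ collinear with $P$. $G'$ is the derived subgroup of $G$. *)

From mathcomp Require Import all_boot fingroup action quotient commutator.
Local Open Scope group_scope.
Set Implicit Arguments. Unset Strict Implicit. Unset Printing Implicit Defensive.

Definition collinear (P L : finType) (I : P -> L -> bool) (x y : P) : Prop :=
  exists m : L, I x m && I y m.

Definition is_GQ (P L : finType) (I : P -> L -> bool) (s : nat) : Prop :=
  [/\ (forall l : L, #|[set x | I x l]| = s.+1),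
      (forall x : P, #|[set l | I x l]| = s.+1),
      (forall (x y : P) (l m : L), x != y -> I x l -> I y l -> I x m -> I y m -> l = m)
    & (forall (x : P) (l : L), ~~ I x l ->
         exists! y : P, I y l /\ collinear I x y)].

Definition acts_by_automorphisms (gT : finGroupType) (G : {group gT})
    (P L : finType) (I : P -> L -> bool)
    (toP : {action gT &-> P}) (toL : {action gT &-> L}) : Prop :=
  forall g, g \in G -> forall (x : P) (l : L), I (toP x g) (toL l g) = I x l.

Definition regular_on_points (gT : finGroupType) (G : {group gT})
    (P : finType) (toP : {action gT &-> P}) : Prop :=
  [transitive G, on [set: P] | toP] /\ (forall x : P, 'C_G[x | toP] = 1%g).

(* Regularity identifies the points with G through g |-> x0^g, and the points
   collinear with x0 become a subset D = D^-1 of G of size s^2 + s + 1 in which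
   every u <> 1 is a quotient g^-1 h (g, h in D) in exactly s + 1 ways: D is a
   difference set.  Hence |G| = (s+1)(s^2+1), and for a linear character
   phi <> 1 the sum S(phi) of phi over D satisfies S(phi)^2 = s^2, so
   S(phi) = +-s; moreover S(phi)^r == S(phi^r) modulo any prime r in the ring
   of algebraic integers.  If |G : G'| had prime divisors p | s+1 and q | s^2+1, a
   linear character of order pq would be forced to take both signs, because for
   even s the numbers s+1, s^2+1 and 2s are pairwise coprime. *)

From mathcomp Require Import all_boot fingroup action quotient commutator.
From mathcomp Require Import all_algebra all_solvable algC algnum classfun character.
From mathcomp Require Import zify.
Set Implicit Arguments. Unset Strict Implicit. Unset Printing Implicit Defensive.
Import GRing.Theory Num.Theory.

Definition collinearb (P L : finType) (I : P -> L -> bool) (x y : P) :=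
  [exists l, I x l && I y l].

Definition perp (P L : finType) (I : P -> L -> bool) (x : P) :=
  [set z | collinearb I x z].

Lemma double_count (T U : finType) (A : pred T) (B : pred U) (R : T -> U -> bool) :
  \sum_(a | A a) #|[set b | B b && R a b]| = \sum_(b | B b) #|[set a | A a && R a b]|.
Proof.
under eq_bigr do rewrite -sum1dep_card big_mkcondr.
rewrite exchange_big; apply: eq_bigr => b _.
by rewrite -sum1dep_card big_mkcondr.
Qed.

Section Quadrangle.
Variables (P L : finType) (I : P -> L -> bool) (s : nat).
Hypothesis gqI : is_GQ I s.

Lemma collinearbP x y : reflect (collinear I x y) (collinearb I x y).
Proof. exact: existsP. Qed.

Lemma collinearbC x y : collinearb I x y = collinearb I y x.
Proof. by apply/existsP/existsP => -[l /andP[xl yl]]; exists l; rewrite xl yl. Qed.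

Lemma lines_through2 x y l : x != y -> I x l -> I y l ->
  [set m | I x m && I y m] = [set l].
Proof.
case: gqI => _ _ plin _ xy xl yl; apply/setP => m; rewrite !inE.
by apply/andP/eqP => [[xm ym] | ->]; [apply: plin xy xm ym xl yl | ].
Qed.

Lemma card_collinear_lines x (Z : {set P}) :
  x \notin Z -> {subset Z <= perp I x} ->
  #|Z| = \sum_(l | I x l) #|[set z in Z | I z l]|.
Proof.
move=> xNZ sZx; rewrite -sum1_card.
have one_line z : z \in Z -> 1%N = #|[set l | I x l && I z l]|.
  move=> Zz; have := sZx z Zz; rewrite inE => /existsP[l /andP[xl zl]].
  have xz : x != z by apply: contraNneq xNZ => ->.
  by rewrite (lines_through2 xz xl zl) cards1.
rewrite (eq_bigr _ one_line) (double_count (mem Z) (I x) (fun z l => I z l)).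
by apply: eq_bigr => l _; apply: eq_card => z; rewrite !inE.
Qed.

Lemma perp_refl x : x \in perp I x.
Proof.
case: gqI => _ linesx _ _; have : (0 < #|[set l | I x l]|)%N by rewrite linesx.
by case/card_gt0P => l; rewrite !inE => xl; apply/existsP; exists l; rewrite xl.
Qed.

Lemma card_perp x : #|perp I x| = (s ^ 2 + s).+1.
Proof.
case: gqI => pts lines _ _; rewrite (cardsD1 x) perp_refl add1n; congr _.+1.
rewrite (@card_collinear_lines x) ?setD11 //; last by move=> z /setD1P[].
rewrite (eq_bigr (fun _ => s)) => [|l xl].
  by rewrite sum_nat_const -[#|I x|]cardsE lines; lia.
apply/eqP; rewrite -eqSS -(pts l) (cardsD1 x [set z | I z l]) inE xl.
apply/eqP; congr _.+1; apply: eq_card => z; rewrite !inE.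
case: (boolP (I z l)) => zl; rewrite ?andbF // andbT.
suff -> : collinearb I x z by rewrite andbT.
by apply/existsP; exists l; rewrite xl zl.
Qed.

Lemma card_perpI x y : x != y -> #|perp I x :&: perp I y| = s.+1.
Proof.
case: gqI => pts lines plin gq xy.
have [/existsP[l /andP[xl yl]] | xNy] := boolP (collinearb I x y).
  rewrite -(pts l); apply: eq_card => z; rewrite !inE.
  apply/idP/idP => [|zl]; last first.
    by apply/andP; split; apply/existsP; exists l; rewrite ?xl ?yl zl.
  rewrite ![collinearb _ _ z]collinearbC => /andP[/collinearbP zx /collinearbP zy].
  apply: contraT => zNl; have [w [_ uniq_w]] := gq z l zNl.
  by rewrite -(uniq_w x (conj xl zx)) (uniq_w y (conj yl zy)) eqxx in xy.
rewrite (@card_collinear_lines x); last 2 first.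
- by rewrite !inE [collinearb I y x]collinearbC negb_and xNy orbT.
- by move=> z /setIP[].
rewrite -(lines x) -sum1dep_card; apply: eq_bigr => l xl.
have yNl : ~~ I y l by apply: contra xNy => yl; apply/existsP; exists l; rewrite xl yl.
have [w [[wl yw] uniq_w]] := gq y l yNl.
rewrite -(cards1 w); apply: eq_card => z; rewrite !inE.
apply/idP/eqP => [/andP[/andP[_ yz] zl] | ->].
  by rewrite (uniq_w z) //; split=> //; apply/collinearbP.
rewrite wl andbT; apply/andP; split; apply/existsP; last first.
  by move/collinearbP: yw => /existsP[m /andP[ym wm]]; exists m; rewrite wm ym.
by exists l; rewrite xl wl.
Qed.

End Quadrangle.

Section EvenCoprime.
Variable s : nat.
Hypothesis s_even : ~~ odd s.

Lemma coprime_double_S : coprime s.*2 s.+1.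
Proof. by rewrite -mul2n coprimeMl coprime2n /= s_even coprimenS. Qed.

Lemma coprime_double_sqrS : coprime s.*2 (s ^ 2).+1.
Proof.
rewrite -mul2n coprimeMl coprime2n /= oddX (negbTE s_even) /=.
by rewrite -coprime_modr -addn1 -mulnn modnMDl coprime_modr coprimen1.
Qed.

Lemma coprime_S_sqrS : coprime s.+1 (s ^ 2).+1.
Proof.
rewrite coprime_sym -(@coprime_pexpr 2 _ s.+1) //.
rewrite (_ : s.+1 ^ 2 = (s ^ 2).+1 + s.*2); last by lia.
by rewrite /coprime gcdnDl -/(coprime _ _) coprime_sym coprime_double_sqrS.
Qed.

End EvenCoprime.

Lemma prime_dvd_coprime p m n : prime p -> coprime m n -> p %| m -> p %| n = false.
Proof.
by move=> p_pr co_mn p_m; apply/negbTE; rewrite -prime_coprime // (coprime_dvdl p_m).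
Qed.

Lemma prime_dvd_gcdn m n :
  0 < n -> ~~ coprime m n -> exists2 p, prime p & (p %| m) && (p %| n).
Proof.
move=> n_gt0 ncop; exists (pdiv (gcdn m n)); last by rewrite -dvdn_gcd pdiv_dvd.
by rewrite pdiv_prime // ltn_neqAle eq_sym ncop gcdn_gt0 n_gt0 orbT.
Qed.

Section RegularAction.
Local Open Scope group_scope.
Variables (gT : finGroupType) (G : {group gT}) (P : finType).
Variable toP : {action gT &-> P}.
Hypothesis regG : regular_on_points G toP.

Lemma regular_orbit_inj x0 : {in G &, injective (toP x0)}.
Proof.
move=> g h Gg Gh gh; apply/eqP; rewrite eq_mulgV1; apply/eqP/set1gP.
case: regG => _ /(_ x0) <-; rewrite inE groupM ?groupV //=; apply/astab1P.
by rewrite actM gh actK.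
Qed.

Lemma regular_orbit_eq1 x0 u : u \in G -> (toP x0 u == x0) = (u == 1).
Proof.
move=> Gu; apply/eqP/eqP => [ux0 | ->]; last exact: act1.
by apply: (@regular_orbit_inj x0); rewrite ?group1 // act1.
Qed.

Lemma regular_orbit_onto x0 z : exists2 g, g \in G & toP x0 g = z.
Proof.
case: regG => /atransP tr _.
by apply/orbitP; rewrite (tr x0) inE.
Qed.

Lemma card_regular_preim x0 (B : {set P}) : #|[set g in G | toP x0 g \in B]| = #|B|.
Proof.
rewrite -(card_in_imset (f := toP x0)); last first.
  by move=> g h /setIdP[Gg _] /setIdP[Gh _]; apply: regular_orbit_inj.
congr #|pred_of_set _|; apply/setP => z; apply/imsetP/idP => [[g /setIdP[_ Bg] ->] // | Bz].
by have [g Gg gz] := regular_orbit_onto x0 z; exists g; rewrite ?inE ?Gg -?gz //= gz.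
Qed.

End RegularAction.

Local Open Scope ring_scope.

Section FrobeniusAint.
Variable r : nat.
Hypothesis r_pr : prime r.

Lemma eqAmod_exprD_prime : {in Aint &, forall x y,
  ((x + y) ^+ r == x ^+ r + y ^+ r %[mod r%:R])%A}.
Proof.
move=> x y Ax Ay; have r_gt0 := prime_gt0 r_pr.
rewrite exprDn big_ord_recl subn0 expr0 mulr1 bin0 mulr1n eqAmodDl.
rewrite -(prednK r_gt0) big_ord_recr /= subnn expr0 mul1r binn mulr1n.
rewrite /bump /= add1n prednK // -[X in (_ == X %[mod _])%A]add0r eqAmodDr eqAmod0.
apply: rpred_sum => i _; have /dvdnP[c ->] : (r %| 'C(r, i.+1))%N.
  by apply: prime_dvd_bin => //; have := ltn_ord i; lia.
rewrite mulrnA -(mulr_natr (_ *+ c)) -[(_ %| _)%A]eqAmod0.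
by rewrite eqAmodMl0 ?rpredMn ?rpredM ?rpredX.
Qed.

Lemma eqAmod_expr_sum_prime (T : finType) (A : {pred T}) (F : T -> algC) :
  {in A, forall i, F i \in Aint} ->
  ((\sum_(i in A) F i) ^+ r == \sum_(i in A) F i ^+ r %[mod r%:R])%A.
Proof.
move=> AF; suff [] : (\sum_(i in A) F i \in Aint) /\
    ((\sum_(i in A) F i) ^+ r == \sum_(i in A) F i ^+ r %[mod r%:R])%A by [].
apply: (big_rec2 (fun a b => a \in Aint /\ (a ^+ r == b %[mod r%:R])%A)).
  by rewrite expr0n gtn_eqF ?prime_gt0 ?Aint0.
move=> i a b Ai [Aa ab]; split; first by rewrite rpredD ?AF.
by apply: eqAmod_trans (eqAmod_exprD_prime (AF i Ai) Aa) _; rewrite eqAmodDl.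
Qed.

Lemma eqAmod_exprN_prime x : x \in Aint -> ((- x) ^+ r == - x ^+ r %[mod r%:R])%A.
Proof.
move=> Ax; have Anx : - x \in Aint by rewrite rpredN.
have := eqAmod_exprD_prime Ax Anx.
rewrite subrr expr0n gtn_eqF ?prime_gt0 // eqAmod_sym => sum_eq0.
by rewrite -(eqAmodDl _ (x ^+ r)) subrr.
Qed.

Lemma eqAmod_natr_expr_prime n : ((n%:R : algC) ^+ r == n%:R %[mod r%:R])%A.
Proof. by rewrite -natrX eqAmod_nat; apply/eqP; apply: fermat_little. Qed.

End FrobeniusAint.

Lemma eqAmodN_nat (d m n : nat) :
  ((m%:R : algC) == - n%:R %[mod d%:R])%A = (d %| m + n)%N.
Proof. by rewrite -(eqAmodDr _ n%:R) addNr -natrD eqAmod0_nat. Qed.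

Lemma lin_char_sum_eq0 (gT : finGroupType) (G : {group gT}) (phi : 'CF(G)) :
  phi \is a linear_char -> phi != 1 -> \sum_(u in G) phi u = 0.
Proof.
move=> lin nt; have /irrP[i def_phi] := lin_char_irr lin.
have : '[phi, 1]_G == 0.
  rewrite def_phi -irr0 cfdot_irr pnatr_eq0 eqb0.
  by apply: contraNneq nt => i0; rewrite def_phi i0 irr0.
rewrite cfdotE mulf_eq0 invr_eq0 pnatr_eq0 gtn_eqF ?cardG_gt0 //= => /eqP sum0.
rewrite -[X in _ = X]sum0.
by apply: eq_bigr => x Gx; rewrite cfun1E Gx conjC1 mulr1.
Qed.

Definition difference_set (gT : finGroupType) (G D : {set gT}) (lam : nat) : Prop :=
  D \subset G /\ {in G :\ 1%g, forall u, #|[set g in D | (g * u)%g \in D]| = lam}.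

Definition char_sum (gT : finGroupType) (G : {group gT}) (D : {set gT})
    (phi : 'CF(G)) : algC :=
  \sum_(g in D) phi g.

Lemma char_sum_frobenius (gT : finGroupType) (G : {group gT}) (D : {set gT})
    (phi : 'CF(G)) r :
  D \subset G -> phi \is a linear_char -> prime r ->
  (char_sum D phi ^+ r == char_sum D (phi ^+ r) %[mod r%:R])%A.
Proof.
move=> sDG lin r_pr; have DG g : g \in D -> g \in G := subsetP sDG g.
rewrite /char_sum [X in (_ == X %[mod _])%A](eq_bigr (fun g => phi g ^+ r)) => [|g /DG Gg].
  by apply: eqAmod_expr_sum_prime => // g /DG Gg; apply: (@Aint_unity_root #[g]%g);
    rewrite ?order_gt0 // unity_rootE lin_char_unity_root.
exact: exp_cfunE.
Qed.

Lemma char_sum1 (gT : finGroupType) (G : {group gT}) (D : {set gT}) :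
  D \subset G -> char_sum D (1 : 'CF(G)) = #|D|%:R.
Proof.
move=> sDG; rewrite /char_sum -sumr_const.
by apply: eq_bigr => g /(subsetP sDG) Gg; rewrite cfun1E Gg.
Qed.

Section SymmetricDifferenceSet.
Variables (gT : finGroupType) (G : {group gT}) (D : {set gT}) (lam : nat).
Hypothesis dsD : difference_set G D lam.
Hypothesis DV : forall g : gT, (g^-1 \in D)%g = (g \in D).

Let sDG : D \subset G. Proof. by case: dsD. Qed.

Lemma char_sum_sqr_conv (phi : 'CF(G)) : phi \is a linear_char ->
  char_sum D phi ^+ 2 = \sum_(u in G) phi u *+ #|[set g in D | (g * u)%g \in D]|.
Proof.
move=> lin; have DG g : g \in D -> g \in G := subsetP sDG g.
have shift g : g \in D -> phi g^-1%g * char_sum D phi =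
    \sum_(u in G) (if (g * u)%g \in D then phi u else 0).
  move=> Dg; rewrite /char_sum mulr_sumr -big_mkcondr /=.
  rewrite (eq_bigl (fun h => (h \in G) && (h \in D))); last first.
    by move=> h; case: (boolP (h \in D)) => [/DG -> | ]; rewrite ?andbF.
  rewrite (reindex_inj (mulgI g)) /=; apply: eq_big => [u | u /andP[Ggu _]].
    by rewrite groupMl ?(DG g Dg).
  by rewrite -lin_charM ?groupV ?(DG g Dg) // mulKg.
have -> : char_sum D phi ^+ 2 = \sum_(g in D) phi g^-1%g * char_sum D phi.
  rewrite expr2 -mulr_suml /char_sum (reindex_inj invg_inj) /=.
  by congr (_ * _); apply: eq_bigl => g; rewrite DV.
rewrite (eq_bigr _ shift) exchange_big /=; apply: eq_bigr => u _.
by rewrite -big_mkcondr -sumr_const; apply: eq_bigl => g; rewrite inE.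
Qed.

Lemma char_sum_sqr (phi : 'CF(G)) : phi \is a linear_char ->
  char_sum D phi ^+ 2 = #|D|%:R + lam%:R * (\sum_(u in G) phi u - 1).
Proof.
move=> lin; rewrite char_sum_sqr_conv // (bigD1 1%g) // [in RHS](bigD1 1%g) //=.
rewrite lin_char1 // addrAC subrr add0r mulr_sumr; congr (_%:R + _).
  by apply: eq_card => g; rewrite inE mulg1 andbb.
apply: eq_bigr => u /andP[Gu nt].
by case: dsD => _ ->; rewrite ?mulr_natl // !inE nt.
Qed.

Lemma char_sum_sqr_nontriv (phi : 'CF(G)) : phi \is a linear_char -> phi != 1 ->
  char_sum D phi ^+ 2 = #|D|%:R - lam%:R.
Proof. by move=> lin nt; rewrite char_sum_sqr // lin_char_sum_eq0 // sub0r mulrN1. Qed.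

Lemma card_difference_set : (#|D| ^ 2 + lam = #|D| + lam * #|G|)%N.
Proof.
have := char_sum_sqr (cfun1_lin_char G); rewrite char_sum1 //.
rewrite (eq_bigr (fun=> 1)) => [|u Gu]; last by rewrite cfun1E Gu.
rewrite sumr_const mulrBr mulr1 => /(congr1 (+%R^~ lam%:R)).
by rewrite /= addrA subrK -natrX -natrM -!natrD => /eqP; rewrite eqC_nat => /eqP.
Qed.

End SymmetricDifferenceSet.

Definition perpG (P L : finType) (I : P -> L -> bool) (gT : finGroupType)
    (G : {set gT}) (toP : {action gT &-> P}) (x0 : P) : {set gT} :=
  [set g in G | toP x0 g \in perp I x0].

Section RegularQuadrangle.
Variables (P L : finType) (I : P -> L -> bool) (s : nat).
Hypothesis gqI : is_GQ I s.
Variables (gT : finGroupType) (G : {group gT}).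
Variables (toP : {action gT &-> P}) (toL : {action gT &-> L}).
Hypothesis autG : acts_by_automorphisms G I toP toL.
Hypothesis regG : regular_on_points G toP.
Variable x0 : P.

Local Notation D := (perpG I G toP x0).

Lemma collinearb_act g x y : g \in G ->
  collinearb I (toP x g) (toP y g) = collinearb I x y.
Proof.
move=> Gg; apply/existsP/existsP => -[l /andP[xl yl]]; last first.
  by exists (toL l g); rewrite !autG ?xl ?yl.
by exists (toL l g^-1%g); rewrite -(autG Gg) -(autG Gg y) actKV xl yl.
Qed.

Lemma perpGV g : (g^-1 \in D)%g = (g \in D).
Proof.
rewrite !inE groupV; have [Gg | //] := boolP (g \in G).
by rewrite -(collinearb_act _ _ Gg) -actM mulVg act1 collinearbC.
Qed.

Lemma card_perpG : #|D| = (s ^ 2 + s).+1.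
Proof. by rewrite card_regular_preim // (card_perp gqI). Qed.

Lemma perpG_sub : D \subset G.
Proof. by apply/subsetP => g /setIdP[]. Qed.

Lemma difference_set_perpG : difference_set G D s.+1.
Proof.
split; first exact: perpG_sub.
move=> u /setD1P[nt Gu]; have Gu' : (u^-1 \in G)%g by rewrite groupV.
have x0u : x0 != toP x0 u^-1%g by rewrite eq_sym (regular_orbit_eq1 regG) // invg_eq1.
rewrite -(card_perpI gqI x0u) -(card_regular_preim regG x0).
apply: eq_card => g; rewrite !inE andbCA.
have [Gg | _] := boolP (g \in G); last by rewrite /= andbF.
by rewrite groupM // -(collinearb_act x0 (toP x0 (g * u)%g) Gu') -actM mulgK.
Qed.

Lemma cardG_regular_GQ : #|G| = (s.+1 * (s ^ 2).+1)%N.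
Proof.
have := card_difference_set difference_set_perpG perpGV; rewrite card_perpG => cardD.
have : (s.+1 * #|G| = s.+1 * (s.+1 * (s ^ 2).+1))%N by nia.
by move/eqP; rewrite eqn_pmul2l // => /eqP.
Qed.

Lemma char_sum_perpG (phi : 'CF(G)) : phi \is a linear_char -> phi != 1 ->
  char_sum D phi = s%:R \/ char_sum D phi = - s%:R.
Proof.
move=> lin nt; have := char_sum_sqr_nontriv difference_set_perpG perpGV lin nt.
rewrite card_perpG -addnS natrD addrK natrX => /eqP.
by rewrite eqf_sqr => /orP[] /eqP; [left | right].
Qed.

Lemma char_sum_perpG_frobenius (phi : 'CF(G)) r :
  phi \is a linear_char -> phi != 1 -> prime r ->
  (char_sum D phi == char_sum D (phi ^+ r) %[mod r%:R])%A.
Proof.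
move=> lin nt r_pr; apply: (eqAmod_trans _ (char_sum_frobenius perpG_sub lin r_pr)).
have [->|->] := char_sum_perpG lin nt; first by rewrite eqAmod_sym eqAmod_natr_expr_prime.
apply: (@eqAmod_trans _ (- s%:R ^+ r)).
  by rewrite eqAmodN opprK eqAmod_sym eqAmod_natr_expr_prime.
by rewrite eqAmod_sym eqAmod_exprN_prime ?Aint_Cnat ?rpred_nat.
Qed.

Hypothesis s_even : ~~ odd s.

Lemma char_sum_perpG_order_S p (lam : 'CF(G)) :
  prime p -> (p %| s.+1)%N -> lam \is a linear_char -> lam != 1 -> lam ^+ p = 1 ->
  char_sum D lam = - s%:R.
Proof.
move=> p_pr p_S lin nt lam_p.
have [S_s|//] := char_sum_perpG lin nt; have := char_sum_perpG_frobenius lin nt p_pr.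
rewrite lam_p S_s char_sum1 ?perpG_sub // card_perpG eqAmod_nat.
rewrite (_ : (s ^ 2 + s).+1 = s + (s ^ 2).+1)%N; last by lia.
rewrite -[X in (X == _ %[mod _])%N]addn0 eqn_modDl mod0n eq_sym -/(dvdn _ _) => p_sqrS.
by rewrite (prime_dvd_coprime p_pr (coprime_S_sqrS s_even)) in p_sqrS.
Qed.

Lemma char_sum_perpG_order_sqrS q (mu : 'CF(G)) :
  prime q -> (q %| (s ^ 2).+1)%N -> mu \is a linear_char -> mu != 1 -> mu ^+ q = 1 ->
  char_sum D mu = s%:R.
Proof.
move=> q_pr q_sqrS lin nt mu_q.
have [//|S_s] := char_sum_perpG lin nt; have := char_sum_perpG_frobenius lin nt q_pr.
rewrite mu_q S_s char_sum1 ?perpG_sub // card_perpG eqAmod_sym eqAmodN_nat.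
rewrite (_ : ((s ^ 2 + s).+1 + s = s.+1 * s.+1)%N); last by lia.
rewrite Euclid_dvdM // orbb => q_S.
by rewrite (prime_dvd_coprime q_pr (coprime_S_sqrS s_even)) in q_sqrS.
Qed.

Lemma no_lin_char_order_S_sqrS p q (psi : 'CF(G)) :
  prime p -> prime q -> (p %| s.+1)%N -> (q %| (s ^ 2).+1)%N ->
  psi \is a linear_char -> #[psi]%CF != (p * q)%N.
Proof.
move=> p_pr q_pr p_S q_sqrS lin; apply/eqP => psi_pq.
have psi_exp1 k : (psi ^+ k == 1) = (p * q %| k)%N by rewrite -dvdn_cforder psi_pq.
have psi_q_nt : psi ^+ q != 1.
  by rewrite psi_exp1 -{2}(mul1n q) dvdn_pmul2r ?prime_gt0 ?Euclid_dvd1.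
have psi_p_nt : psi ^+ p != 1.
  by rewrite psi_exp1 mulnC -{2}(mul1n p) dvdn_pmul2r ?prime_gt0 ?Euclid_dvd1.
have psi_qp : (psi ^+ q) ^+ p = 1 by apply/eqP; rewrite -exprM psi_exp1 mulnC.
have psi_pq' : (psi ^+ p) ^+ q = 1 by apply/eqP; rewrite -exprM psi_exp1.
have S_q := char_sum_perpG_order_S p_pr p_S (rpredX q lin) psi_q_nt psi_qp.
have S_p := char_sum_perpG_order_sqrS q_pr q_sqrS (rpredX p lin) psi_p_nt psi_pq'.
have nt : psi != 1 by apply: contraNneq psi_q_nt => ->; rewrite expr1n.
have [S_s | S_s] := char_sum_perpG lin nt.
  have := char_sum_perpG_frobenius lin nt q_pr; rewrite S_s S_q eqAmodN_nat addnn.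
  by rewrite (prime_dvd_coprime q_pr _ q_sqrS) // coprime_sym coprime_double_sqrS.
have := char_sum_perpG_frobenius lin nt p_pr; rewrite S_s S_p eqAmodN eqAmodN_nat addnn.
by rewrite (prime_dvd_coprime p_pr _ p_S) // coprime_sym coprime_double_S.
Qed.

End RegularQuadrangle.

Lemma lin_char_of_order_mul (gT : finGroupType) (G : {group gT}) p q :
  prime p -> prime q -> p != q ->
  (p %| #|G : G^`(1)|%g)%N -> (q %| #|G : G^`(1)|%g)%N ->
  exists2 psi : 'CF(G), psi \is a linear_char & #[psi]%CF = (p * q)%N.
Proof.
move=> p_pr q_pr pq p_dv q_dv.
have [linG [cF [cF_inj card_linG cF_lin _] [_ cFM _ _ cF_order]]] := lin_char_group G.
have [u _ ou] : {u | u \in [set: linG] & #[u]%g = p}.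
  by apply: Cauchy; rewrite // cardsT card_linG.
have [w _ ow] : {w | w \in [set: linG] & #[w]%g = q}.
  by apply: Cauchy; rewrite // cardsT card_linG.
have cuw : commute u w by apply: cF_inj; rewrite !cFM; exact: mulrC.
have co_uw : coprime #[u]%g #[w]%g by rewrite ou ow prime_coprime // dvdn_prime2.
by exists (cF (u * w)%g); rewrite // cF_order orderM // ou ow.
Qed.

Local Close Scope ring_scope.
Open Scope group_scope.

Theorem lemma3p8 (P L : finType) (I : P -> L -> bool) (s : nat)
  (gT : finGroupType) (G : {group gT})
  (toP : {action gT &-> P}) (toL : {action gT &-> L}) :
  is_GQ I s -> ~~ odd s -> 4 <= s ->
  acts_by_automorphisms G I toP toL ->
  regular_on_points G toP ->
  (#|G / G^`(1)| %| 1 + s) \/ (#|G / G^`(1)| %| 1 + s ^ 2).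
Proof.
move=> gqI s_even _ autG regG.
have [x0 _ _] := imsetP (proj1 regG).
rewrite card_quotient ?der_norm // !add1n; set n := #|G : G^`(1)|.
have n_dvd : (n %| s.+1 * (s ^ 2).+1)%N.
  by rewrite -(cardG_regular_GQ gqI autG regG x0) dvdn_indexg.
have [co_S | /prime_dvd_gcdn[// | p p_pr /andP[p_n p_S]]] := boolP (coprime n s.+1).
  by right; rewrite -(Gauss_dvdr _ co_S).
have [co_sqrS | /prime_dvd_gcdn[// | q q_pr /andP[q_n q_sqrS]]] :=
  boolP (coprime n (s ^ 2).+1).
  by left; rewrite -(Gauss_dvdl _ co_sqrS).
have pq : p != q.
  by apply: contraTneq q_sqrS => <-; rewrite (prime_dvd_coprime p_pr (coprime_S_sqrS s_even)).
have [psi lin psi_pq] := lin_char_of_order_mul p_pr q_pr pq p_n q_n.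
by have /eqP := no_lin_char_order_S_sqrS gqI autG regG x0 s_even p_pr q_pr p_S q_sqrS lin.
Qed.
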